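(* Assume the well-posedness and controllability assumptions below. Then the rotated problem $\bar{\mathbb{P}}(x,\theta)$ is recursively feasible (if it is feasible at $(x_k,\theta_k)$, it is feasible at $(x_{k+1},\theta_{k+1})$ for the closed-loop successor state and any $\theta_{k+1}\in\mathcal{C}(\theta_k)$) and it has the same set of minimizers as $\mathbb{P}(x,\theta)$. Let $\tilde\kappa_N$ be the receding horizon control law of $\bar{\mathbb{P}}$ and $\widetilde V_N^\star$ its optimal value. If moreover the strict stochastic dissipativity assumption below holds, then along the closed loop $x_{k+1}=f(x_k,\tilde\kappa_N(x_k,\theta_k),\theta_k)$, $$\mathcal{L}\widetilde V_N^\star(x_k,\theta_k):=\mathbb{E}[\widetilde V_N^\star(x_{k+1},\theta_{k+1})-\widetilde V_N^\star(x_k,\theta_k)\mid\mathfrak{F}_k]\le-\rho(x_k,\theta_k),$$ where $\rho:\mathbb{R}^n\times\mathcal{N}\to\mathbb{R}_+$ is positive definite in its first argument with respect to $x_s$.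
   Context: Setting: $\mathcal{N}=\{1,\dots,\nu\}$; $\{\theta_k\}$ a time-homogeneous Markov chain on $\mathcal{N}$ with transition matrix $P=(p_{ij})$ on a filtered probability space $(\Omega,\mathfrak{F},\{\mathfrak{F}_k\},\mathbb{P})$, $\mathfrak{F}_k$ generated by the history up to time $k$; system $x_{k+1}=f(x_k,u_k,\theta_k)$ ($x_k\in\mathbb{R}^n$, $u_k\in\mathbb{R}^m$, $x_k,\theta_k$ measured at time $k$); constraints $(x_k,u_k)\in Y_{\theta_k}$; stage cost $\ell$. $u\lhd\mathfrak{F}_k$ means $\mathfrak{F}_k$-measurable. Cover $\mathcal{C}(i)=\{j:p_{ij}>0\}$; bet node $\mathrm{bet}(i)\in\mathcal{C}(i)$ maximizing $p_{ij}$ over $j\in\mathcal{C}(i)$. Well-posedness: each $\ell(\cdot,\cdot,\theta)$ nonnegative, lower semicontinuous, level-bounded in $u$ locally uniformly in $x$; $f(\cdot,\cdot,\theta)$ continuous; $Y_\theta$ nonempty compact; chain irreducible and aperiodic. Optimal steady states $(x_s^\theta,u_s^\theta)$ minimize $\ell(x,u,\theta)$ s.t. $f(x,u,\theta)=x$, $(x,u)\in Y_\theta$, with value $\ell_s(\theta)$. Controllability: for all $i,j$ there is $\bar u_s^{i,j}$ with $(x_s^i,\bar u_s^{i,j})\in Y_j$, $f(x_s^i,\bar u_s^{i,j},j)=x_s^{\mathrm{bet}(j)}$. Common optimal equilibrium: there is one optimal steady state $(x_s,u_s)=(0,0)$ common to all modes; $\ell_s$ denotes the corresponding optimal steady-state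 cost (treated as a single value). Strict stochastic dissipativity assumption: in addition to the common optimal equilibrium, there are a function $\lambda:\mathbb{R}^n\times\mathcal{N}\to\mathbb{R}$, lower semicontinuous in its first argument, with $\lambda(x_s,\theta)=\lambda_s$ independent of $\theta$, and a convex $\rho:\mathbb{R}^n\times\mathcal{N}\to\mathbb{R}_+$, positive definite with respect to $x_s$ ($\rho(x_s,\theta)=0$, $\rho(x,\theta)>0$ for $x\ne x_s$), such that for all states, inputs and modes $\mathcal{L}\lambda(x_k,\theta_k)\le \ell(x_k,u_k,\theta_k)-\ell_s-\rho(x_k,\theta_k)$, where $\mathcal{L}\lambda(x_k,\theta_k):=\mathbb{E}[\lambda(x_{k+1},\theta_{k+1})-\lambda(x_k,\theta_k)\mid\mathfrak{F}_k]$ with $x_{k+1}=f(x_k,u_k,\theta_k)$. Rotated stage cost: $L(x_k,u_k,\theta_k):=\ell(x_k,u_k,\theta_k)-\mathcal{L}\lambda(x_k,\theta_k)$. Problem $\mathbb{P}(x,\theta)$: minimize $\mathbb{E}[\sum_{j=0}^{N-1}\ell(x_j,u_j,\theta_j)\mid\mathfrak{F}_0]$ over $(u_0,\dots,u_{N-1})$ subject to $x_{k+1}=f(x_k,u_k,\theta_k)$, $(x_k,u_k)\in Y_{\theta_k}$ ($k=0,\dots,N-1$), $(x_0,\theta_0)=(x,\theta)$, $x_N=x_s^{\mathrm{bet}(\theta_{N-1})}$, $u_k\lhd\mathfrak{F}_k$. Rotated problem $\bar{\mathbb{P}}(x,\theta)$: $\widetilde V_N^\star(x,\theta)=\inf\mathbb{E}[\sum_{j=0}^{N-1}L(x_j,u_j,\theta_j)\mid\mathfrak{F}_0]$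 subject to the same constraints. The receding horizon law is the first element of an optimal policy. *)

From HB Require Import structures.
From mathcomp Require Import all_boot all_order all_algebra.
From mathcomp Require Import all_classical all_reals all_analysis.
Set Implicit Arguments. Unset Strict Implicit. Unset Printing Implicit Defensive.
Import Order.TTheory GRing.Theory Num.Theory.
Import numFieldNormedType.Exports.
Local Open Scope classical_set_scope.
Local Open Scope ring_scope.

Section MJS.
Variables (R : realType) (n m nu : nat).
Variable (P : 'M[R]_nu).
Variable (f : 'rV[R]_n -> 'rV[R]_m -> 'I_nu -> 'rV[R]_n).

Definition mc_stochastic := (forall i j, 0 <= P i j) /\ (forall i, \sum_j P i j = 1).

Fixpoint Pk (k : nat) : 'M[R]_nu :=
  match k with 0 => 1%:M | k'.+1 => Pk k' *m P end.

Definition mc_irreducible := forall i j, exists k, 0 < Pk k i j.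

(* mc_aperiodic: the period gcd{k > 0 | P^k_ii > 0} of every state equals 1 *)
Definition mc_aperiodic :=
  forall i (d : nat), (forall k, (0 < k)%N -> 0 < Pk k i i -> (d %| k)%N) -> d = 1%N.

Definition mc_cover (i : 'I_nu) := [set j | 0 < P i j].

Definition is_bet (bet : 'I_nu -> 'I_nu) :=
  forall i, mc_cover i (bet i) /\ forall j, mc_cover i j -> P i j <= P i (bet i).

(* generator of lambda: L lambda (x,theta) = E[lambda(x+,theta+) - lambda(x,theta) | F_k] *)
Definition genL (lam : 'rV[R]_n -> 'I_nu -> R) x u i : R :=
  \sum_j P i j * lam (f x u i) j - lam x i.

(* probability of the mode path a :: s given theta_0 = a *)
Fixpoint pprob (a : 'I_nu) (s : seq 'I_nu) : R :=
  match s with [::] => 1 | b :: s' => P a b * pprob b s' end.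

(* A policy: u_k is a function of the mode history (theta_0, ..., theta_k);
   given F_0 (i.e. x_0, theta_0), this is exactly F_k-measurability. *)
Definition policy := seq 'I_nu -> 'rV[R]_m.

(* sum of stage costs c(x_k,u_k,theta_k) along the mode path a :: rest,
   hist = modes seen before a, x = current state *)
Fixpoint cost_path (c : 'rV[R]_n -> 'rV[R]_m -> 'I_nu -> R) (pol : policy)
  (hist : seq 'I_nu) (x : 'rV[R]_n) (a : 'I_nu) (rest : seq 'I_nu) : R :=
  let h := rcons hist a in
  c x (pol h) a +
  match rest with
  | [::] => 0
  | b :: rest' => cost_path c pol h (f x (pol h) a) b rest'
  end.

Fixpoint feas_path (Y : 'I_nu -> set ('rV[R]_n * 'rV[R]_m)) (xs : 'I_nu -> 'rV[R]_n)
  (bet : 'I_nu -> 'I_nu) (pol : policy)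
  (hist : seq 'I_nu) (x : 'rV[R]_n) (a : 'I_nu) (rest : seq 'I_nu) : Prop :=
  let h := rcons hist a in
  Y a (x, pol h) /\
  match rest with
  | [::] => f x (pol h) a = xs (bet a)
  | b :: rest' => feas_path Y xs bet pol h (f x (pol h) a) b rest'
  end.

(* horizon N (>= 1): mode paths theta_0 = th, theta_1..theta_{N-1} = t *)
Definition ExpCost (N : nat) c (pol : policy) x th : R :=
  \sum_(t : (N.-1).-tuple 'I_nu) pprob th t * cost_path c pol [::] x th t.

(* constraints hold almost surely *)
Definition Feasible (N : nat) Y xs bet (pol : policy) x th : Prop :=
  forall t : (N.-1).-tuple 'I_nu, 0 < pprob th t -> feas_path Y xs bet pol [::] x th t.

Definition optimal N c Y xs bet (pol : policy) x th : Prop :=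
  Feasible N Y xs bet pol x th /\
  forall pol', Feasible N Y xs bet pol' x th -> ExpCost N c pol x th <= ExpCost N c pol' x th.

Definition Lrot (ell : 'rV[R]_n -> 'rV[R]_m -> 'I_nu -> R) lam x u i : R :=
  ell x u i - genL lam x u i.

(* optimal value of the rotated problem (+oo if infeasible) *)
Definition Vtilde N ell lam Y xs bet x th : \bar R :=
  ereal_inf [set (ExpCost N (Lrot ell lam) pol x th)%:E
            | pol in [set pol | Feasible N Y xs bet pol x th]].

Definition RH_law N ell lam Y xs bet (kappa : 'rV[R]_n -> 'I_nu -> 'rV[R]_m) : Prop :=
  forall x th, (exists pol, Feasible N Y xs bet pol x th) ->
    exists pol, optimal N (Lrot ell lam) Y xs bet pol x th /\ pol [:: th] = kappa x th.

End MJS.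

Definition level_bdd_loc_unif (R : realType) (n m : nat)
  (g : 'rV[R]_n -> 'rV[R]_m -> R) : Prop :=
  forall (xb : 'rV[R]_n) (a : R), exists2 V, nbhs xb V &
    exists M : R, forall x u, V x -> g x u <= a -> `|u| <= M.

Definition convex_fun (R : realType) (n : nat) (g : 'rV[R]_n -> R) : Prop :=
  forall (x y : 'rV[R]_n) (t : R), 0 <= t <= 1 ->
    g (t *: x + (1 - t) *: y) <= t * g x + (1 - t) * g y.

From HB Require Import structures.
From mathcomp Require Import all_boot all_order all_algebra.
From mathcomp Require Import all_classical all_reals all_analysis.
From mathcomp Require Import ring lra zify.
Set Implicit Arguments. Unset Strict Implicit. Unset Printing Implicit Defensive.
Import Order.TTheory GRing.Theory Num.Theory.
Import numFieldNormedType.Exports.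
Local Open Scope classical_set_scope.
Local Open Scope ring_scope.

(* Expectations over the mode tree are computed by backward recursion, so every
   argument is an induction on the remaining horizon.  Along a feasible policy the
   rotated cost telescopes: it is the original cost plus lam(x0, th0) minus the
   expected value of lam at the terminal state, which is pinned to xs (bet _) and
   hence does not depend on the policy; so both problems have the same minimizers.
   For recursive feasibility and the Lyapunov decrease, drop the first step of an
   optimal policy and append an input that keeps the state at the terminal steady
   state.  From each successor mode this shifted policy costs the tail of the
   optimal cost plus ls, so the expected value decreases by at least
   L(x, u, th) - ls, which dissipativity bounds below by rho(x, th). *)

Lemma sum_tuple_cons (V : nmodType) (T : finType) k (F : k.+1.-tuple T -> V) :
  \sum_t F t = \sum_j \sum_(t : k.-tuple T) F [tuple of j :: t].
Proof.
rewrite pair_big /= (reindex (fun p : T * k.-tuple T => [tuple of p.1 :: p.2])) //=.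
exists (fun t => (thead t, [tuple of behead t])) => [[a b]|t] _ /=.
  by congr pair; apply: val_inj.
by case/tupleP: t => a b; apply: val_inj.
Qed.

Section MarkovWeights.
Variables (R : realType) (nu : nat) (P : 'M[R]_nu).
Hypothesis P_stoch : mc_stochastic P.

Let P_ge0 i j : 0 <= P i j := P_stoch.1 i j.

Lemma wsum_const a c : \sum_j P a j * c = c.
Proof. by rewrite -mulr_suml P_stoch.2 mul1r. Qed.

Lemma eq_wsum_supp a (F G : 'I_nu -> R) :
  (forall j, 0 < P a j -> F j = G j) -> \sum_j P a j * F j = \sum_j P a j * G j.
Proof.
move=> FG; apply: eq_bigr => j _.
by have := P_ge0 a j; rewrite le_eqVlt => /predU1P[<-|/FG->]; rewrite ?mul0r.
Qed.

Lemma wsum_supp a (F : 'I_nu -> R) :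
  \sum_(j | 0 < P a j) P a j * F j = \sum_j P a j * F j.
Proof.
rewrite big_mkcond /=; apply: eq_bigr => j _.
by have := P_ge0 a j; rewrite le_eqVlt => /predU1P[<-|->]; rewrite ?ltxx ?mul0r.
Qed.

Lemma exists_row_gt0 a : exists j, 0 < P a j.
Proof.
have : \sum_j P a j != 0 by rewrite P_stoch.2 oner_neq0.
by rewrite psumr_neq0 // => /hasP[j _ /= Pj]; exists j.
Qed.

Lemma pprob_ge0 a s : 0 <= pprob P a s.
Proof. by elim: s a => [|b s IH] a //=; rewrite mulr_ge0. Qed.

Lemma pprob_cons_gt0 a b s : (0 < pprob P a (b :: s)) = (0 < P a b) && (0 < pprob P b s).
Proof. exact: mulr_ge0_gt0 (pprob_ge0 _ _). Qed.

Lemma exists_pprob_gt0 k a : exists t : k.-tuple 'I_nu, 0 < pprob P a t.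
Proof.
elim: k a => [|k IH] a; first by exists [tuple]; rewrite /= ltr01.
have [j Pj] := exists_row_gt0 a; have [t Pt] := IH j.
by exists [tuple of j :: t]; rewrite pprob_cons_gt0 Pj.
Qed.

Lemma sum_pprob k a : \sum_(t : k.-tuple 'I_nu) pprob P a t = 1.
Proof.
elim: k a => [|k IH] a.
  by rewrite (eq_bigr (fun _ => 1)) ?sumr_const ?card_tuple // => t _; rewrite tuple0.
by rewrite sum_tuple_cons -(wsum_const a 1); apply: eq_bigr => j _; rewrite -mulr_sumr IH.
Qed.

End MarkovWeights.

Section Recursion.
Variables (R : realType) (n m nu : nat) (P : 'M[R]_nu).
Variable f : 'rV[R]_n -> 'rV[R]_m -> 'I_nu -> 'rV[R]_n.
Variables (Y : 'I_nu -> set ('rV[R]_n * 'rV[R]_m)) (xs : 'I_nu -> 'rV[R]_n).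
Variable bet : 'I_nu -> 'I_nu.
Hypothesis P_stoch : mc_stochastic P.

Fixpoint exp_cost (c : 'rV[R]_n -> 'rV[R]_m -> 'I_nu -> R) (pol : policy R m nu)
    (hist : seq 'I_nu) (x : 'rV[R]_n) (a : 'I_nu) (k : nat) : R :=
  let u := pol (rcons hist a) in
  c x u a +
  if k is k'.+1 then \sum_j P a j * exp_cost c pol (rcons hist a) (f x u a) j k' else 0.

Fixpoint feas_rec (pol : policy R m nu)
    (hist : seq 'I_nu) (x : 'rV[R]_n) (a : 'I_nu) (k : nat) : Prop :=
  let u := pol (rcons hist a) in
  Y a (x, u) /\
  if k is k'.+1 then forall j, 0 < P a j -> feas_rec pol (rcons hist a) (f x u a) j k'
  else f x u a = xs (bet a).

Lemma sum_pprob_cost_path c pol k hist x a :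
  \sum_(t : k.-tuple 'I_nu) pprob P a t * cost_path f c pol hist x a t =
  exp_cost c pol hist x a k.
Proof.
elim: k hist x a => [|k IH] hist x a.
  rewrite (eq_bigr (fun _ => c x (pol (rcons hist a)) a)) => [|t _].
    by rewrite sumr_const card_tuple /= addr0.
  by rewrite tuple0 /= mul1r addr0.
rewrite sum_tuple_cons /= -[X in _ = X + _](wsum_const P_stoch a) -big_split /=.
apply: eq_bigr => j _; rewrite -IH -mulrDr -[c _ _ _ in RHS]mul1r -(sum_pprob P_stoch k j).
by rewrite mulr_suml -big_split mulr_sumr; apply: eq_bigr => t _ /=; ring.
Qed.

Lemma ExpCostE N c pol x th : ExpCost P f N c pol x th = exp_cost c pol [::] x th N.-1.
Proof. exact: sum_pprob_cost_path. Qed.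

Lemma feas_path_rec pol k hist x a :
  (forall t : k.-tuple 'I_nu, 0 < pprob P a t -> feas_path f Y xs bet pol hist x a t) <->
  feas_rec pol hist x a k.
Proof.
elim: k hist x a => [|k IH] hist x a; split.
- by move/(_ [tuple]); apply; rewrite ltr01.
- by move=> H t _; rewrite tuple0.
- move=> H; split.
    by have [t /H] := exists_pprob_gt0 P_stoch k.+1 a; case/tupleP: t => j t [].
  move=> j Pj; apply/IH => t Pt.
  have Pjt : 0 < pprob P a [tuple of j :: t] by rewrite /= mulr_gt0.
  by have /= [] := H _ Pjt.
- move=> [Ya H] t; case/tupleP: t => j t; rewrite (pprob_cons_gt0 P_stoch) => /andP[Pj Pt].
  by split=> //; exact: (IH _ _ _).2 (H j Pj) t Pt.
Qed.

Lemma FeasibleE N pol x th :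
  Feasible P f N Y xs bet pol x th <-> feas_rec pol [::] x th N.-1.
Proof. exact: feas_path_rec. Qed.

Fixpoint terminal_lam (lam : 'rV[R]_n -> 'I_nu -> R) (k : nat) (a : 'I_nu) : R :=
  if k is k'.+1 then \sum_j P a j * terminal_lam lam k' j
  else \sum_j P a j * lam (xs (bet a)) j.

Lemma exp_cost_Lrot ell lam pol k hist x a :
  feas_rec pol hist x a k ->
  exp_cost (Lrot P f ell lam) pol hist x a k =
  exp_cost ell pol hist x a k + lam x a - terminal_lam lam k a.
Proof.
elim: k hist x a => [|k IH] hist x a /= [_ H].
  by rewrite /Lrot /genL H; lra.
set x' := f x _ a.
rewrite (eq_wsum_supp P_stoch _ (F := fun j => exp_cost _ pol _ x' j k) (G := fun j =>
  exp_cost ell pol (rcons hist a) x' j k + lam x' j - terminal_lam lam k j)).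
  rewrite /Lrot /genL -/x'; under [X in _ + X = _]eq_bigr do rewrite mulrBr mulrDr.
  by rewrite sumrB big_split /=; lra.
by move=> j Pj; apply/IH/H.
Qed.

Lemma optimal_Lrot N ell lam pol x th :
  optimal P f N ell Y xs bet pol x th <->
  optimal P f N (Lrot P f ell lam) Y xs bet pol x th.
Proof.
have costE p : Feasible P f N Y xs bet p x th ->
    ExpCost P f N (Lrot P f ell lam) p x th =
    ExpCost P f N ell p x th + lam x th - terminal_lam lam N.-1 th.
  by move=> /FeasibleE Fp; rewrite !ExpCostE exp_cost_Lrot.
by split=> -[Fpol opt]; split=> // p Fp; have := opt p Fp; rewrite !costE //; lra.
Qed.

(* Histories of the shifted problem omit the initial mode [th]; at the appended
   last step [ufin] is fed the previous and the current mode. *)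
Definition shift_policy (pol : policy R m nu) (th : 'I_nu) (N : nat)
    (ufin : 'I_nu -> 'I_nu -> 'rV[R]_m) : policy R m nu :=
  fun h => if (size h < N)%N then pol (th :: h)
           else ufin (last th (belast th h)) (last th h).

Section Shift.
Variables (pol : policy R m nu) (th : 'I_nu) (N : nat).
Variable ufin : 'I_nu -> 'I_nu -> 'rV[R]_m.
Hypothesis N_gt0 : (0 < N)%N.
Hypothesis ufin_steady : forall a b,
  Y b (xs (bet a), ufin a b) /\ f (xs (bet a)) (ufin a b) b = xs (bet b).

Local Notation spol := (shift_policy pol th N ufin).

Lemma shift_policy_prefix h : (size h < N)%N -> spol h = pol (th :: h).
Proof. by rewrite /shift_policy => ->. Qed.

Lemma shift_policy_last h b : size h = N.-1 -> spol (rcons h b) = ufin (last th h) b.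
Proof.
by move=> hN; rewrite /shift_policy size_rcons hN prednK // ltnn belast_rcons last_rcons.
Qed.

Lemma shift_policy_single b : N.-1 = 0%N -> spol [:: b] = ufin th b.
Proof. by move=> N1; apply: (shift_policy_last (h := [::])); rewrite N1. Qed.

Lemma feas_rec_shift k hist x a : (size hist + k + 2 = N)%N ->
  feas_rec pol (th :: hist) x a k -> feas_rec spol hist x a k.+1.
Proof.
elim: k hist x a => [|k IH] hist x a hN /= [Ya H].
  rewrite shift_policy_prefix; last by rewrite size_rcons; lia.
  split=> // j _; rewrite shift_policy_last ?last_rcons; last by rewrite size_rcons; lia.
  by rewrite H; exact: ufin_steady.
rewrite shift_policy_prefix; last by rewrite size_rcons; lia.
by split=> // j Pj; apply: IH; [rewrite size_rcons; lia | apply: H].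
Qed.

Lemma exp_cost_shift c ls k hist x a :
  (forall a b, c (xs (bet a)) (ufin a b) b = ls) -> (size hist + k + 2 = N)%N ->
  feas_rec pol (th :: hist) x a k ->
  exp_cost c spol hist x a k.+1 = exp_cost c pol (th :: hist) x a k + ls.
Proof.
move=> c_ufin; elim: k hist x a => [|k IH] hist x a hN /= [_ H].
  rewrite shift_policy_prefix; last by rewrite size_rcons; lia.
  have spol_last j : spol (rcons (rcons hist a) j) = ufin a j.
    by rewrite shift_policy_last ?last_rcons // size_rcons; lia.
  under eq_bigr => j _ do rewrite spol_last H c_ufin addr0.
  by rewrite (wsum_const P_stoch) ?addr0.
rewrite shift_policy_prefix; last by rewrite size_rcons; lia.
set x' := f x _ a.
rewrite (eq_wsum_supp P_stoch _ (F := fun j => exp_cost c spol _ x' j k.+1)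
  (G := fun j => exp_cost c pol (th :: rcons hist a) x' j k + ls)).
  under [X in _ + X = _]eq_bigr do rewrite mulrDr.
  by rewrite big_split /= (wsum_const P_stoch) addrA.
by move=> j Pj; apply: IH; [rewrite size_rcons; lia | apply: H].
Qed.

Lemma feas_rec_shift_succ x j : 0 < P th j ->
  feas_rec pol [::] x th N.-1 -> feas_rec spol [::] (f x (pol [:: th]) th) j N.-1.
Proof.
move=> Pj; case kN: N.-1 => [|k] [_ H].
  by rewrite /= in H; rewrite /= shift_policy_single // H; exact: ufin_steady.
by apply: feas_rec_shift; [rewrite /=; lia | apply: H].
Qed.

Lemma exp_cost_shift_succ c ls x :
  (forall a b, c (xs (bet a)) (ufin a b) b = ls) -> feas_rec pol [::] x th N.-1 ->
  exists E : 'I_nu -> R,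
    exp_cost c pol [::] x th N.-1 = c x (pol [:: th]) th + \sum_j P th j * E j /\
    forall j, 0 < P th j -> exp_cost c spol [::] (f x (pol [:: th]) th) j N.-1 = E j + ls.
Proof.
move=> c_ufin; case kN: N.-1 => [|k] [_ H].
  exists (fun=> 0); split=> [|j _] /=; first by rewrite big1 // => j _; rewrite mulr0.
  by rewrite /= in H; rewrite shift_policy_single // H c_ufin; lra.
exists (fun j => exp_cost c pol [:: th] (f x (pol [:: th]) th) j k); split=> // j Pj.
by apply: exp_cost_shift => //; [rewrite /=; lia | apply: H].
Qed.

End Shift.

Lemma Vtilde_le N ell lam pol x th : Feasible P f N Y xs bet pol x th ->
  (Vtilde P f N ell lam Y xs bet x th <= (ExpCost P f N (Lrot P f ell lam) pol x th)%:E)%E.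
Proof. by move=> Fpol; apply: ereal_inf_lbound; exists pol. Qed.

Lemma Vtilde_optimal N ell lam pol x th :
  optimal P f N (Lrot P f ell lam) Y xs bet pol x th ->
  Vtilde P f N ell lam Y xs bet x th = (ExpCost P f N (Lrot P f ell lam) pol x th)%:E.
Proof.
move=> [Fpol opt]; apply/eqP; rewrite eq_le Vtilde_le //=.
by apply: le_ereal_inf_tmp => _ [p Fp <-]; rewrite lee_fin; exact: opt.
Qed.

Lemma RH_law_recursively_feasible N ell lam kappa :
  (0 < N)%N -> (forall i j, exists u, Y j (xs i, u) /\ f (xs i) u j = xs (bet j)) ->
  RH_law P f N ell lam Y xs bet kappa ->
  forall x th, (exists pol, Feasible P f N Y xs bet pol x th) ->
  forall th', mc_cover P th th' ->
  exists pol', Feasible P f N Y xs bet pol' (f x (kappa x th) th) th'.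
Proof.
move=> N_gt0 ctrl RH x th /RH[pol [[Fpol _] <-]] th' Pth'.
pose uc a b := proj1_sig (cid (ctrl (bet a) b)).
have uc_steady a b : Y b (xs (bet a), uc a b) /\ f (xs (bet a)) (uc a b) b = xs (bet b).
  exact: proj2_sig (cid (ctrl (bet a) b)).
exists (shift_policy pol th N uc); apply/FeasibleE.
by apply: feas_rec_shift_succ => //; exact/FeasibleE.
Qed.

Section Lyapunov.
Variables (ell : 'rV[R]_n -> 'rV[R]_m -> 'I_nu -> R) (lam : 'rV[R]_n -> 'I_nu -> R).
Variables (rho : 'rV[R]_n -> 'I_nu -> R) (us : 'I_nu -> 'rV[R]_m).
Variables (xe : 'rV[R]_n) (ls lams : R).
Hypothesis xs_xe : forall b, xs b = xe.
Hypothesis steady : forall b, f (xs b) (us b) b = xs b /\ Y b (xs b, us b).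
Hypothesis ell_s : forall b, ell (xs b) (us b) b = ls.
Hypothesis lam_s : forall b, lam xe b = lams.
Hypothesis dissipative : forall x u th, genL P f lam x u th <= ell x u th - ls - rho x th.

Lemma Lrot_steady b : Lrot P f ell lam xe (us b) b = ls.
Proof.
have [fb _] := steady b; rewrite /Lrot /genL -(xs_xe b) fb ell_s xs_xe lam_s.
by under eq_bigr do rewrite lam_s; rewrite (wsum_const P_stoch); lra.
Qed.

Lemma RH_law_Vtilde_decrease N kappa x th :
  (0 < N)%N -> RH_law P f N ell lam Y xs bet kappa ->
  (exists pol, Feasible P f N Y xs bet pol x th) ->
  ((\sum_(j | (0 < P th j)%R)
      (P th j)%:E * Vtilde P f N ell lam Y xs bet (f x (kappa x th) th) j)
    - Vtilde P f N ell lam Y xs bet x th <= - (rho x th)%:E)%E.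
Proof.
move=> N_gt0 RH /RH[pol [opt <-]].
have us_final a b : Y b (xs (bet a), us b) /\ f (xs (bet a)) (us b) b = xs (bet b).
  by have [] := steady b; rewrite !xs_xe.
have Fpol : feas_rec pol [::] x th N.-1 by apply/FeasibleE; case: opt.
have c_final a b : Lrot P f ell lam (xs (bet a)) (us b) b = ls.
  by rewrite xs_xe Lrot_steady.
have [E [costE succE]] := exp_cost_shift_succ (ufin := fun=> us) N_gt0 c_final Fpol.
have V_succ j : 0 < P th j ->
    (Vtilde P f N ell lam Y xs bet (f x (pol [:: th]) th) j <= (E j + ls)%:E)%E.
  move=> Pj; rewrite -succE // -ExpCostE; apply: Vtilde_le; apply/FeasibleE.
  exact: feas_rec_shift_succ.
rewrite (Vtilde_optimal opt) ExpCostE costE.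
apply: (@le_trans _ _ ((\sum_(j | 0 < P th j) P th j * (E j + ls))%:E -
    (Lrot P f ell lam x (pol [:: th]) th + \sum_j P th j * E j)%:E)%E).
  apply: leeB => //; rewrite -sumEFin; apply: lee_sum => j Pj.
  by rewrite EFinM; apply: lee_wpmul2l; [rewrite lee_fin; exact: P_stoch.1 | exact: V_succ].
rewrite -EFinB lee_fin (wsum_supp P_stoch); under eq_bigr do rewrite mulrDr.
rewrite big_split /= (wsum_const P_stoch).
by have := dissipative x (pol [:: th]) th; rewrite /Lrot; lra.
Qed.

End Lyapunov.

End Recursion.

Theorem lemma2 (R : realType) (n m nu N : nat)
  (P : 'M[R]_nu)
  (f : 'rV[R]_n -> 'rV[R]_m -> 'I_nu -> 'rV[R]_n)
  (Y : 'I_nu -> set ('rV[R]_n * 'rV[R]_m))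
  (ell : 'rV[R]_n -> 'rV[R]_m -> 'I_nu -> R)
  (bet : 'I_nu -> 'I_nu)
  (xs : 'I_nu -> 'rV[R]_n) (us : 'I_nu -> 'rV[R]_m)
  (lam : 'rV[R]_n -> 'I_nu -> R) :
  (0 < N)%N ->
  (* Markov chain *)
  mc_stochastic P -> mc_irreducible P -> mc_aperiodic P ->
  is_bet P bet ->
  (* well-posedness *)
  (forall x u th, 0 <= ell x u th) ->
  (forall th, lower_semicontinuous (fun z : 'rV[R]_n * 'rV[R]_m => (ell z.1 z.2 th)%:E)) ->
  (forall th, level_bdd_loc_unif (fun x u => ell x u th)) ->
  (forall th, continuous (fun z : 'rV[R]_n * 'rV[R]_m => f z.1 z.2 th)) ->
  (forall th, Y th !=set0 /\ compact (Y th)) ->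
  (* (xs th, us th) is an optimal steady state of mode th *)
  (forall th, f (xs th) (us th) th = xs th /\ Y th (xs th, us th) /\
     forall x u, f x u th = x -> Y th (x, u) -> ell (xs th) (us th) th <= ell x u th) ->
  (* controllability *)
  (forall i j, exists u, Y j (xs i, u) /\ f (xs i) u j = xs (bet j)) ->
  (* recursive feasibility of the rotated problem under its receding horizon law *)
  (forall kappa, RH_law P f N ell lam Y xs bet kappa ->
     forall x th, (exists pol, Feasible P f N Y xs bet pol x th) ->
     forall th', mc_cover P th th' ->
       exists pol', Feasible P f N Y xs bet pol' (f x (kappa x th) th) th')
  /\
  (* same set of minimizers *)
  (forall x th pol, optimal P f N ell Y xs bet pol x th <->
                    optimal P f N (Lrot P f ell lam) Y xs bet pol x th)
  /\
  (* strict mc_stochastic dissipativity => Lyapunov decrease *)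
  (forall (ls lams : R) (rho : 'rV[R]_n -> 'I_nu -> R),
     (forall th, xs th = 0 /\ us th = 0) ->
     (forall th, ell (xs th) (us th) th = ls) ->
     (forall th, lower_semicontinuous (fun x : 'rV[R]_n => (lam x th)%:E)) ->
     (forall th, lam 0 th = lams) ->
     (forall x th, 0 <= rho x th) ->
     (forall th, convex_fun (fun x => rho x th)) ->
     (forall th, rho 0 th = 0) ->
     (forall x th, x != 0 -> 0 < rho x th) ->
     (forall x u th, genL P f lam x u th <= ell x u th - ls - rho x th) ->
     forall kappa, RH_law P f N ell lam Y xs bet kappa ->
     forall x th, (exists pol, Feasible P f N Y xs bet pol x th) ->
       ((\sum_(j | (0 < P th j)%R)
            (P th j)%:E * Vtilde P f N ell lam Y xs bet (f x (kappa x th) th) j)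
         - Vtilde P f N ell lam Y xs bet x th <= - (rho x th)%:E)%E).
Proof.
move=> N_gt0 P_stoch _ _ _ _ _ _ _ _ steady ctrl; split; [|split].
- by move=> kappa; apply: RH_law_recursively_feasible.
- by move=> x th pol; apply: optimal_Lrot.
- move=> ls lams rho zero_s ell_s _ lam_s _ _ _ _ dissip kappa RH x th Fx.
  apply: (RH_law_Vtilde_decrease P_stoch (us := us) (fun b => (zero_s b).1)) => // b.
  by have [? [? _]] := steady b.
Qed.
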